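(* Every strongly sofic monoid is surjunctive.
   Context: A monoid $M$ is strongly sofic if for every finite subset $K \subset M$ there exists an integer $\Delta_K \geq 1$ such that for every $\varepsilon > 0$ there exist a non-empty finite set $D$ and a map $\sigma \colon M \to \operatorname{Map}(D)$ (where $\operatorname{Map}(D)$ is the set of all maps $D \to D$ with composition) satisfying: (1) $\sigma(1_M) = \mathrm{Id}_D$; (2) $d_D^{\mathrm{Ham}}(\sigma(k_1k_2),\sigma(k_1)\sigma(k_2)) \leq \varepsilon$ for all $k_1,k_2 \in K$; (3) $d_D^{\mathrm{Ham}}(\sigma(k_1),\sigma(k_2)) \geq 1-\varepsilon$ for all distinct $k_1,k_2 \in K$; (4) $|\sigma(k)^{-1}(v)| \leq \Delta_K$ for all $k \in K$ and $v \in D$. Here $d_D^{\mathrm{Ham}}(f,g) = \frac{1}{|D|}|\{v \in D : f(v) \neq g(v)\}|$ is the Hamming metric. For a monoid $M$ and a finite set $A$, $A^M$ is the set of all maps $M \to A$ with the prodiscrete (product of discrete) topology and the shift action of $M$ given by $(mx)(m') = x(m'm)$ for $m,m' \in M$, $x \in A^M$. A cellular automaton is a continuous $M$-equivariant map $\tau \colon A^M \to A^M$. A monoid $M$ is surjunctive if for every finite set $A$, every injective cellular automaton $\tau \colon A^M \to A^M$ is surjective. *)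

From mathcomp Require Import all_boot.
From Stdlib Require Import Reals.
Set Implicit Arguments.
Unset Strict Implicit.
Unset Printing Implicit Defensive.

Record monoid := Monoid {
  mcar :> Type;
  mmul : mcar -> mcar -> mcar;
  mone : mcar;
  mmulA : forall a b c, mmul a (mmul b c) = mmul (mmul a b) c;
  mmul1m : forall a, mmul mone a = a;
  mmulm1 : forall a, mmul a mone = a
}.

Definition ham_dist (D : finType) (f g : D -> D) : R :=
  (INR #|[set v : D | f v != g v]| / INR #|D|)%R.

(* Strong soficity; finite subsets K of M are represented by lists. *)
Definition strongly_sofic (M : monoid) : Prop :=
  forall K : list M, exists Delta : nat, (1 <= Delta)%N /\
    forall eps : R, (0 < eps)%R ->
      exists (D : finType) (sigma : M -> D -> D),
        (0 < #|D|)%N /\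
        sigma (mone M) = (fun v : D => v) /\
        (forall k1 k2, List.In k1 K -> List.In k2 K ->
           (ham_dist (sigma (mmul k1 k2)) (sigma k1 \o sigma k2) <= eps)%R) /\
        (forall k1 k2, List.In k1 K -> List.In k2 K -> k1 <> k2 ->
           (1 - eps <= ham_dist (sigma k1) (sigma k2))%R) /\
        (forall k v, List.In k K -> (#|[set u : D | sigma k u == v]| <= Delta)%N).

Definition shift (M : monoid) (A : Type) (m : M) (x : M -> A) : M -> A :=
  fun m' => x (mmul m' m).

(* Continuity for the prodiscrete topology on A^M (A finite, discrete):
   each coordinate of the image depends only on finitely many coordinates
   of the input near every point (basic open sets are cylinders). *)
Definition prodiscrete_continuous (M : monoid) (A : Type)
    (tau : (M -> A) -> (M -> A)) : Prop :=
  forall (x : M -> A) (m : M), exists F : list M,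
    forall y : M -> A, (forall f, List.In f F -> y f = x f) -> tau y m = tau x m.

Definition cellular_automaton (M : monoid) (A : finType)
    (tau : (M -> A) -> (M -> A)) : Prop :=
  prodiscrete_continuous tau /\
  (forall (m : M) (x : M -> A), tau (shift m x) = shift m (tau x)).

Definition surjunctive (M : monoid) : Prop :=
  forall (A : finType) (tau : (M -> A) -> (M -> A)),
    cellular_automaton tau -> injective tau -> forall y, exists x, tau x = y.

(* Suppose the injective cellular automaton tau misses y. Compactness of A^M gives
   finite sets of M on which everything happens: y already disagrees with every
   tau x on a finite window F, tau x 1 depends only on x restricted to a memory
   set S, and x 1 is determined by tau x restricted to a finite set N.  A sofic
   approximation sigma of M on a finite set D, accurate on S, N and F, transports
   tau to a map on A^D.  At good vertices (those where sigma is multiplicative and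
   separates F) this map is injective, so its image has at least |A|^|W|
   elements, W the set of good vertices.  On the other hand every image avoids
   the pattern of y at each window sigma(F)v; a maximal family V of pairwise
   disjoint windows has |V| >= |W| / (r^2 Delta), so the image has at most
   |A|^|D| (1 - |A|^-r)^|V| elements.  As the bad vertices form a small fraction
   of D, the two bounds contradict each other (Bernoulli's inequality). *)

From mathcomp Require Import all_boot.
From Stdlib Require Import Reals Lra.
From mathcomp Require Import zify boolp.
From mathcomp Require classical_sets.
(* [Reals] rebinds [^] in [nat_scope]. *)
Local Notation "m ^ n" := (expn m n) : nat_scope.
Set Implicit Arguments.
Unset Strict Implicit.
Unset Printing Implicit Defensive.

Lemma In_enum (T : finType) (t : T) : List.In t (enum T).
Proof.
have : t \in enum T by rewrite mem_enum.
by elim: (enum T) => //= u s IH; rewrite inE => /orP [/eqP ->|/IH]; [left|right].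
Qed.

(* [t0] only serves as the default value of [List.nth]. *)
Lemma exists_injective_enumeration (T : Type) (t0 : T) (L : list T) :
  exists r (f : 'I_r -> T), injective f /\ forall t, List.In t L -> exists i, f i = t.
Proof.
pose dec := fun a b : T => pselect (a = b).
pose L' := List.nodup dec L.
exists (size L'), (fun i => List.nth i L' t0); split.
  move=> i j e; apply: val_inj.
  by apply: (List.NoDup_nth L' t0).1 (List.NoDup_nodup dec L) _ _ _ _ e; apply/ltP.
move=> t /(List.nodup_In dec) /(List.In_nth _ _ t0) [n [/ltP lt_n <-]].
by exists (Ordinal lt_n).
Qed.

(** * Compactness of the prodiscrete space *)

Section Compactness.
Variables (M : Type) (B : finType).

Definition agree_on (L : list M) (x y : M -> B) :=
  forall m, List.In m L -> x m = y m.

Definition prodiscrete_closed (X : (M -> B) -> Prop) :=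
  forall x, (forall L, exists2 z, X z & agree_on L z x) -> X x.

Definition locally_constant (C : Type) (phi : (M -> B) -> C) :=
  forall x, exists L, forall y, agree_on L y x -> phi y = phi x.

Lemma locally_constant_closed (C : Type) (phi : (M -> B) -> C) (Q : C -> Prop) :
  locally_constant phi -> prodiscrete_closed (fun x => Q (phi x)).
Proof.
by move=> lc x xcl; have [L HL] := lc x; have [z Qz /HL <-] := xcl L.
Qed.

Section FiniteIntersection.
Variables (I : Type) (P : I -> (M -> B) -> Prop).
Hypothesis P_closed : forall i, prodiscrete_closed (P i).
Hypothesis P_fip : forall F : list I, exists x, forall i, List.In i F -> P i x.

Let solves (F : list I) (L : list (M * B)) (x : M -> B) :=
  (forall i, List.In i F -> P i x) /\ (forall p, List.In p L -> x p.1 = p.2).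

(* Partial configurations are relations between M and B. *)
Let consistent (G : M * B -> Prop) :=
  forall F L, (forall p, List.In p L -> G p) -> exists x, solves F L x.

Let consistent_chain_union (Fam : (M * B -> Prop) -> Prop) :
  (forall G, Fam G -> consistent G) ->
  classical_sets.total_on Fam classical_sets.subset ->
  consistent (classical_sets.bigcup Fam (fun G => G)).
Proof.
move=> Fam_cons Fam_chain F L L_in.
have [[G0 FG0]|noG] := pselect (exists G, Fam G); last first.
  have [x Px] := P_fip F; exists x; split=> // p /L_in [G FG _].
  by case: noG; exists G.
have [G [FG LG]] : exists G, Fam G /\ forall p, List.In p L -> G p.
  elim: L L_in => [|p L IH] L_in; first by exists G0.
  have [G1 [FG1 LG1]] := IH (fun q Lq => L_in q (or_intror Lq)).
  have [G2 FG2 G2p] := L_in p (or_introl erefl).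
  have [G12|G21] := Fam_chain _ _ FG1 FG2.
  - by exists G2; split=> // q [<-|/LG1/G12].
  - by exists G1; split=> // q [<-|/LG1 //]; apply: G21.
exact: Fam_cons FG F L LG.
Qed.

Let maximal_consistent_total (G : M * B -> Prop) :
  consistent G -> (forall G', classical_sets.proper G G' -> ~ consistent G') ->
  forall m, exists b, G (m, b).
Proof.
move=> Gcons Gmax m; apply: contrapT => noG.
(* Each value b at m has a finite obstruction; together they obstruct G. *)
have bad b : exists FL : list I * list (M * B),
    (forall p, List.In p FL.2 -> G p \/ p = (m, b)) /\ ~ exists x, solves FL.1 FL.2 x.
  apply: contrapT => good; apply: (Gmax (fun p => G p \/ p = (m, b))).
    split=> [p Gp|sub]; first by left.
    by apply: noG; exists b; apply: sub; right.
  move=> F L L_in; apply: contrapT => nx; apply: good; exists (F, L).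
  by split=> // p /L_in.
have [FL FLbad] := choice bad.
pose F := List.flat_map (fun b => (FL b).1) (enum B).
pose L := List.filter (fun p => `[< G p >]) (List.flat_map (fun b => (FL b).2) (enum B)).
have [x [xF xL]] : exists x, solves F L x.
  by apply: Gcons => p /List.filter_In [_ /asboolP].
have [FLG nx] := FLbad (x m); apply: nx; exists x; split.
  by move=> i Fi; apply: xF; apply/List.in_flat_map; exists (x m); split=> //; exact: In_enum.
move=> p Lp; have [Gp|-> //] := FLG p Lp; apply: xL; apply/List.filter_In.
split; last exact/asboolP.
by apply/List.in_flat_map; exists (x m); split=> //; exact: In_enum.
Qed.

Lemma finite_intersection : exists x, forall i, P i x.
Proof.
(* Zorn gives a maximal consistent partial configuration; it is total and its
   graph is a point of every [P i]. *)
have [G [Gcons Gmax]] := classical_sets.Zorn_bigcup consistent_chain_union.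
have [x Gx] := choice (maximal_consistent_total Gcons Gmax).
exists x => i; apply: P_closed => L.
have [z [Pz zx]] : exists z, solves [:: i] [seq (m, x m) | m <- L] z.
  by apply: Gcons => _ /List.in_map_iff [m [<- _]].
exists z; first exact: Pz (or_introl erefl).
by move=> m Lm; apply: (zx (m, x m)); apply: List.in_map.
Qed.

End FiniteIntersection.
End Compactness.

Section Determination.
Variables (M : Type) (A : finType) (C C' : Type).
Variables (phi : M -> (M -> A) -> C) (psi : (M -> A) -> C').
Hypothesis phi_lc : forall n, locally_constant (phi n).
Hypothesis psi_lc : locally_constant psi.

Let locally_constant_pair (E : Type) (f : (M -> A) -> E) :
  locally_constant f ->
  locally_constant (fun p : M -> A * A => (f (fun m => (p m).1), f (fun m => (p m).2))).
Proof.
move=> lcf p; have [L1 H1] := lcf (fun m => (p m).1).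
have [L2 H2] := lcf (fun m => (p m).2).
exists (L1 ++ L2) => q qp; congr pair; [apply: H1 | apply: H2] => m Lm /=;
  by rewrite qp //; apply: List.in_or_app; auto.
Qed.

Lemma determined_by_finitely_many :
  (forall x y, (forall n, phi n x = phi n y) -> psi x = psi y) ->
  exists L, forall x y, (forall n, List.In n L -> phi n x = phi n y) -> psi x = psi y.
Proof.
move=> det; apply: contrapT => /forallNP noL.
pose P (o : option M) (p : M -> A * A) :=
  let x := fun m => (p m).1 in let y := fun m => (p m).2 in
  if o is Some n then phi n x = phi n y else psi x <> psi y.
have [p Pp] : exists p, forall o, P o p.
  apply: finite_intersection => [[n|]|F].
  - exact: (locally_constant_closed (Q := fun c => c.1 = c.2)
                                     (locally_constant_pair (phi_lc n))).
  - exact: (locally_constant_closed (Q := fun c => c.1 <> c.2)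
                                     (locally_constant_pair psi_lc)).
  - pose L := List.flat_map (fun o => if o is Some n then [:: n] else [::]) F.
    have /existsNP [x /existsNP [y /not_implyP [xy nxy]]] := noL L.
    exists (fun m => (x m, y m)) => -[n|] Fn //=; apply: xy.
    by apply/List.in_flat_map; exists (Some n); split=> //; left.
exact: (Pp None) (det _ _ (fun n => Pp (Some n))).
Qed.

End Determination.

Lemma image_closed (M : Type) (A : finType) (tau : (M -> A) -> M -> A) (y : M -> A) :
  (forall m, locally_constant (fun x => tau x m)) ->
  (forall F, exists x, agree_on F (tau x) y) -> exists x, tau x = y.
Proof.
move=> tau_lc approx.
have [x xy] : exists x, forall m, tau x m = y m.
  apply: finite_intersection => [m|F].
  - exact: (locally_constant_closed (Q := fun a => a = y m) (tau_lc m)).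
  - exact: approx.
by exists x; apply: funext.
Qed.

Lemma locally_constant_uniform (M : Type) (A : finType) (C : Type) (psi : (M -> A) -> C) :
  locally_constant psi -> exists L, forall x y, agree_on L x y -> psi x = psi y.
Proof.
move=> psi_lc.
apply: (determined_by_finitely_many (phi := fun m x => x m)) => // [m x | x y eq_xy].
  by exists [:: m] => y /(_ m (or_introl erefl)).
by congr psi; apply: funext.
Qed.

Lemma injective_uniform (M : Type) (A : finType) (tau : (M -> A) -> M -> A) (m0 : M) :
  (forall m, locally_constant (fun x => tau x m)) -> injective tau ->
  exists N, forall x y, agree_on N (tau x) (tau y) -> x m0 = y m0.
Proof.
move=> tau_lc tau_inj.
apply: (determined_by_finitely_many (psi := fun x => x m0)) => // [x | x y eq_xy].
  by exists [:: m0] => y /(_ _ (or_introl erefl)).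
by rewrite (tau_inj _ _ (funext eq_xy)).
Qed.

Lemma finite_obstruction (M : Type) (A : finType) (tau : (M -> A) -> M -> A) (y : M -> A) :
  (forall m, locally_constant (fun x => tau x m)) -> (forall x, tau x <> y) ->
  exists r (f : 'I_r -> M), injective f /\ forall x, exists i, tau x (f i) <> y (f i).
Proof.
move=> tau_lc y_notin.
have [F F_obstr] : exists F, forall x, ~ agree_on F (tau x) y.
  apply: contrapT => /forallNP noF.
  suff /(image_closed tau_lc) [x /y_notin //] : forall F, exists x, agree_on F (tau x) y.
  by move=> F; apply: contrapT => /forallNP; apply: noF.
case: F F_obstr => [|m0 F] F_obstr; first by case: (F_obstr y).
have [r [f [f_inj F_f]]] := exists_injective_enumeration m0 (m0 :: F).
exists r, f; split=> // x; apply: contrapT => /forallNP eq_f.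
by apply: (F_obstr x) => _ /F_f [i <-]; apply: contrapT.
Qed.

(** * Counting configurations *)

Lemma card_bigcup_seq_le (I : Type) (T : finType) (s : seq I) (B : I -> {set T})
    (q c : nat) :
  (forall i, List.In i s -> #|B i| * q <= c) -> #|\bigcup_(i <- s) B i| * q <= size s * c.
Proof.
elim: s => [|i s IH] Bc; first by rewrite big_nil cards0.
rewrite big_cons mulSn; apply: leq_trans (leq_mul (leq_card_setU _ _).1 (leqnn q)) _.
by rewrite mulnDl leq_add ?Bc ?IH //; [left | move=> j sj; apply: Bc; right].
Qed.

Lemma subset_bigcup_seq (I : Type) (T : finType) (s : seq I) (B : I -> {set T}) i :
  List.In i s -> B i \subset \bigcup_(j <- s) B j.
Proof.
elim: s => //= j s IH [<-|/IH sub]; rewrite big_cons; first exact: subsetUl.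
exact: subset_trans sub (subsetUr _ _).
Qed.

Lemma card_imset_factor (T U V : finType) (f : T -> U) (g : T -> V) :
  (forall x y, f x = f y -> g x = g y) -> #|g @: [set: T]| <= #|f @: [set: T]|.
Proof.
move=> fg; case: (pickP (fun _ : T => true)) => [x0 _|T0]; last first.
  suff -> : g @: [set: T] = set0 by rewrite cards0.
  by apply/setP => v; rewrite inE; apply/imsetP => -[x _ _]; have := T0 x.
pose h u := g (odflt x0 [pick x | f x == u]).
apply: leq_trans (leq_imset_card h (f @: [set: T])); apply: subset_leq_card.
apply/subsetP => _ /imsetP [x _ ->]; apply/imsetP; exists (f x); first exact: imset_f.
by rewrite /h; case: pickP => [x' /eqP /fg -> //|/(_ x)]; rewrite eqxx.
Qed.

Section Sparse.
Variables (T : finType) (adj : rel T) (d : nat).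
Hypotheses (adj_refl : reflexive adj) (adj_sym : symmetric adj).
Hypothesis adj_degree : forall v, #|[set w | adj w v]| <= d.

Lemma exists_sparse_subset (W : {set T}) : exists V : {set T},
  [/\ V \subset W, {in V &, forall v v', v != v' -> ~~ adj v v'} & #|W| <= #|V| * d].
Proof.
pose sparse (V : {set T}) :=
  (V \subset W) && [forall v in V, forall v' in V, (v != v') ==> ~~ adj v v'].
have sparse0 : sparse set0 by rewrite /sparse sub0set; apply/forall_inP => v; rewrite inE.
have [V /andP [VW /forall_inP Vsp] Vmax] := @arg_maxnP _ set0 sparse (fun V => #|V|) sparse0.
have {}Vsp : {in V &, forall v v', v != v' -> ~~ adj v v'}.
  by move=> v v' /Vsp /forall_inP Vv v'V; apply/implyP/Vv.
exists V; split=> //.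
have WN : W \subset \bigcup_(v <- enum V) [set w | adj w v].
  apply/subsetP => w wW; rewrite bigcup_seq; apply: contraT => /bigcupP wN.
  have adjV x : x \in V -> ~~ adj w x.
    by move=> xV; apply/negP => wx; apply: wN; exists x; rewrite ?inE ?mem_enum.
  have wV : w \notin V by apply/negP => /adjV; rewrite adj_refl.
  suff /Vmax : sparse (w |: V) by rewrite cardsU1 wV /= ltnn.
  rewrite /sparse subUset sub1set wW VW /=.
  apply/forall_inP => u /setU1P uV; apply/forall_inP => u' /setU1P u'V; apply/implyP.
  case: uV u'V => [->|uV] [->|u'V]; rewrite ?eqxx //.
  - by move=> _; apply: adjV.
  - by move=> _; rewrite adj_sym; apply: adjV.
  - exact: Vsp.
rewrite -(muln1 #|W|) [#|V|]cardE; apply: leq_trans (leq_mul (subset_leq_card WN) (leqnn 1)) _.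
by apply: card_bigcup_seq_le => v _; rewrite muln1.
Qed.

End Sparse.

Section Windows.
Variables (D A : finType) (r : nat).

Definition pattern (w : {ffun D -> A}) (psi : 'I_r -> D) : {ffun 'I_r -> A} :=
  [ffun i => w (psi i)].

Section OneWindow.
Variables (psi : 'I_r -> D) (X : {set {ffun D -> A}}).
Hypothesis psi_inj : injective psi.
Hypothesis X_local :
  forall w w' : {ffun D -> A},
  {in [predC codom psi], w =1 w'} -> (w \in X) = (w' \in X).

Let patch (h : {ffun 'I_r -> A}) (w : {ffun D -> A}) : {ffun D -> A} :=
  [ffun u => if [pick i | psi i == u] is Some i then h i else w u].

Let pattern_patch h w : pattern (patch h w) psi = h.
Proof.
apply/ffunP => i; rewrite !ffunE; case: pickP => [j /eqP /psi_inj -> //|].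
by move=> /(_ i); rewrite eqxx.
Qed.

Let patch_out h w u : u \notin codom psi -> patch h w u = w u.
Proof.
move=> /codomP nu; rewrite ffunE; case: pickP => // i /eqP ui.
by case: nu; exists i.
Qed.

Let class h := [set w in X | pattern w psi == h].

Let card_class_le h h' : #|class h| <= #|class h'|.
Proof.
have patch_inj : {in class h &, injective (patch h')}.
  move=> w1 w2; rewrite !inE => /andP [_ /eqP p1] /andP [_ /eqP p2] e.
  apply/ffunP => u; have [/codomP [i ->]|nu] := boolP (u \in codom psi).
    by move: p1; rewrite -p2 => /ffunP /(_ i); rewrite !ffunE.
  by rewrite -(patch_out h' w1 nu) -(patch_out h' w2 nu) e.
rewrite -(card_in_imset patch_inj); apply/subset_leq_card/subsetP.
move=> _ /imsetP [w /setIdP [wX _] ->]; rewrite inE pattern_patch eqxx andbT.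
by rewrite (X_local (w' := w)) // => u; rewrite inE => /patch_out.
Qed.

Lemma card_pattern_avoid (g : {ffun 'I_r -> A}) :
  #|[set w in X | pattern w psi != g]| * #|A| ^ r = #|X| * (#|A| ^ r - 1).
Proof.
have card_X : #|X| = #|A| ^ r * #|class g|.
  rewrite -sum1_card (partition_big (pattern^~ psi) xpredT) //=.
  rewrite (eq_bigr (fun=> #|class g|)) ?sum_nat_const ?card_ffun ?card_ord //.
  move=> h _; rewrite sum1dep_card -/(class h).
  by apply/eqP; rewrite eqn_leq !card_class_le.
have -> : [set w in X | pattern w psi != g] = X :\: class g.
  by apply/setP => w; rewrite !inE; case: (w \in X); rewrite ?andbF ?andbT.
rewrite cardsD (setIidPr _); last by apply/subsetP => w /setIdP [].
by rewrite card_X mulnBl mulnBr muln1 (mulnC #|class g|).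
Qed.

End OneWindow.

Definition avoiding (phi : D -> 'I_r -> D) (g : {ffun 'I_r -> A}) (s : seq D) :=
  [set w : {ffun D -> A} | all (fun v => pattern w (phi v) != g) s].

Lemma card_avoiding (phi : D -> 'I_r -> D) g s : uniq s ->
  {in s, forall v, injective (phi v)} ->
  {in s &, forall v v', v != v' -> [disjoint codom (phi v) & codom (phi v')]} ->
  #|avoiding phi g s| * (#|A| ^ r) ^ size s = #|A| ^ #|D| * (#|A| ^ r - 1) ^ size s.
Proof.
elim: s => [|v s IH] /=.
  by move=> *; rewrite !muln1 -card_ffun; apply: eq_card => w; rewrite !inE.
move=> /andP [vs us] inj disj.
have sub : {subset s <= v :: s} by move=> u su; rewrite inE su orbT.
have {}IH := IH us (sub_in1 sub inj) (sub_in2 sub disj).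
have -> : avoiding phi g (v :: s) = [set w in avoiding phi g s | pattern w (phi v) != g].
  by apply/setP => w; rewrite !inE andbC.
rewrite !expnS mulnA (card_pattern_avoid (inj v (mem_head _ _))); last first.
  move=> w w' ww'; rewrite !inE; apply: eq_in_all => v' v's; congr (~~ (_ == _)).
  apply/ffunP => i; rewrite !ffunE; apply: ww'; rewrite inE.
  have vv' : v != v' by apply: contraNneq vs => ->.
  by rewrite (disjointFl (disj v v' (mem_head _ _) (sub _ v's) vv') (codom_f _ i)).
by rewrite mulnAC IH -mulnA (mulnC _ (_ - 1)).
Qed.

End Windows.

Lemma card_image_ge_restrict (D A T : finType) (W : {set D}) (a0 : A)
    (f : {ffun D -> A} -> T) :
  (forall z z', f z = f z' -> {in W, z =1 z'}) ->
  #|A| ^ #|W| <= #|f @: [set: {ffun D -> A}]|.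
Proof.
move=> fW; pose restr (z : {ffun D -> A}) := [ffun v => if v \in W then z v else a0].
apply: leq_trans (card_imset_factor (g := restr) _); last first.
  by move=> z z' /fW zz'; apply/ffunP => v; rewrite !ffunE; case: ifP => // /zz'.
rewrite -cardsT -(card_pffun_on a0 W [set: A]); apply/subset_leq_card/subsetP.
move=> z /pffun_onP [zW _]; apply/imsetP; exists z; rewrite ?inE //.
apply/ffunP => v; rewrite ffunE; case: ifP => // vW; apply/eqP.
by apply: contraFT vW => /(subsetP zW).
Qed.

Lemma bernoulli_nat x n : x ^ n * (x + n) <= (x + 1) ^ n * x.
Proof.
elim: n => [|n IH]; first by rewrite !expn0 !mul1n addn0.
rewrite !expnS; apply: (@leq_trans ((x + 1) * (x ^ n * (x + n)))); last first.
  by rewrite -[X in _ <= X]mulnA leq_mul2l IH orbT.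
set t := x ^ n; nia.
Qed.

Lemma expn_ratio_gt a x beta n : 0 < a -> 0 < x -> (a - 1) * x * beta < n ->
  a ^ beta * x ^ n < (x + 1) ^ n.
Proof.
move=> a_gt0 x_gt0 lt_n; set t := (a - 1) * x.
(* Bernoulli: (1 + 1/x)^((a - 1) x) >= a. *)
have ax : a * x ^ t <= (x + 1) ^ t.
  have := bernoulli_nat x t; rewrite /t.
  have -> : x + (a - 1) * x = a * x by rewrite -{1}(mul1n x) -mulnDl subnKC.
  by rewrite mulnA (mulnC _ a) leq_pmul2r.
have axb : a ^ beta * x ^ (t * beta) <= (x + 1) ^ (t * beta).
  rewrite (expnM x) (expnM (x + 1)) -expnMn.
  by case: beta {lt_n} => [|b]; rewrite ?expn0 // leq_exp2r.
have [k ->] : exists k, n = t * beta + k.+1 by exists (n - t * beta).-1; lia.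
rewrite !expnD mulnA; apply: leq_trans (leq_mul axb (leqnn _)).
by rewrite ltn_pmul2l ?ltn_exp2r ?addn1 // muln_gt0 !expn_gt0 a_gt0 x_gt0.
Qed.

(** * Sofic approximations *)

Section Hamming.
Variables (D : finType) (q : nat).
Hypotheses (D_gt0 : 0 < #|D|) (q_gt0 : 0 < q).

Let le_frac_inv c : (INR c / INR #|D| <= / INR q)%R -> c * q <= #|D|.
Proof.
have [Dpos qpos] : (0 < INR #|D| /\ 0 < INR q)%R by split; apply/lt_0_INR/ltP.
move=> le_c; apply/leP/INR_le; rewrite mult_INR.
have -> : INR #|D| = (INR #|D| * / INR q * INR q)%R by field; lra.
apply: Rmult_le_compat_r; first lra.
by rewrite -(Rmult_1_r (INR c)) -(Rinv_l (INR #|D|)) ?Rmult_assoc; [nra | lra].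
Qed.

Lemma card_ham_neq (f g : D -> D) :
  (ham_dist f g <= / INR q)%R -> #|[set v | f v != g v]| * q <= #|D|.
Proof. exact: le_frac_inv. Qed.

Lemma card_ham_eq (f g : D -> D) :
  (1 - / INR q <= ham_dist f g)%R -> #|[set v | f v == g v]| * q <= #|D|.
Proof.
rewrite /ham_dist => far; apply: le_frac_inv.
have split_D : (INR #|[set v | f v != g v]| + INR #|[set v | f v == g v]| = INR #|D|)%R.
  rewrite -plus_INR -(cardsC [set v | f v == g v]) addnC; congr (INR (_ + _)).
  by apply: eq_card => v; rewrite !inE.
have Dpos : (0 < INR #|D|)%R by apply/lt_0_INR/ltP.
suff -> : (INR #|[set v | f v == g v]| / INR #|D| =
           1 - INR #|[set v | f v != g v]| / INR #|D|)%R by lra.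
by rewrite -split_D; field; rewrite split_D; lra.
Qed.
End Hamming.

Section GoodVertices.
Variables (M : monoid) (D : finType) (sigma : M -> D -> D) (q : nat).
Hypotheses (D_gt0 : 0 < #|D|) (q_gt0 : 0 < q).
Variables (S L : list M) (r : nat) (f : 'I_r -> M).
Hypothesis sigma_mul : forall s k, List.In s S -> List.In k L ->
  (ham_dist (sigma (mmul s k)) (sigma s \o sigma k) <= / INR q)%R.
Hypothesis sigma_sep : forall i j, i != j ->
  (1 - / INR q <= ham_dist (sigma (f i)) (sigma (f j)))%R.

Lemma exists_good_vertices : exists W : {set D},
  [/\ {in W, forall v s k, List.In s S -> List.In k L ->
         sigma (mmul s k) v = sigma s (sigma k v)},
      {in W, forall v, injective (fun i => sigma (f i) v)} &
      #|~: W| * q <= size S * (size L * #|D|) + r * (r * #|D|)].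
Proof.
pose bad_mul := \bigcup_(s <- S) \bigcup_(k <- L)
  [set v | sigma (mmul s k) v != sigma s (sigma k v)].
pose bad_sep := \bigcup_(i <- enum 'I_r) \bigcup_(j <- enum 'I_r)
  [set v | (i != j) && (sigma (f i) v == sigma (f j) v)].
exists (~: (bad_mul :|: bad_sep)); split.
- move=> v; rewrite !inE negb_or => /andP [good _] s k Ss Lk; apply/eqP.
  apply: contraNT good => bad; apply: subsetP (subset_bigcup_seq _ Ss) _ _.
  by apply: subsetP (subset_bigcup_seq _ Lk) _ _; rewrite inE.
- move=> v; rewrite !inE negb_or => /andP [_ good] i j e; apply/eqP.
  apply: contraNT good => ij; rewrite /bad_sep bigcup_seq; apply/bigcupP.
  exists i; rewrite ?mem_enum //.
  by rewrite bigcup_seq; apply/bigcupP; exists j; rewrite ?mem_enum // inE ij e eqxx.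
rewrite setCK; apply: leq_trans (leq_mul (leq_card_setU _ _).1 (leqnn q)) _.
rewrite mulnDl leq_add //.
- apply: card_bigcup_seq_le => s Ss; apply: card_bigcup_seq_le => k Lk.
  exact: (card_ham_neq D_gt0 q_gt0 (sigma_mul Ss Lk)).
- rewrite -[X in _ <= X * _](size_enum_ord r); apply: card_bigcup_seq_le => i _.
  rewrite -[X in _ <= X * _](size_enum_ord r); apply: card_bigcup_seq_le => j _.
  have [<-|ij] := eqVneq i j.
    by rewrite (eq_card0 (A := [set v | _])) // => v; rewrite inE eqxx.
  apply: leq_trans (card_ham_eq D_gt0 q_gt0 (sigma_sep ij)).
  by rewrite leq_pmul2r // subset_leq_card //; apply/subsetP => v; rewrite !inE => /andP [].
Qed.
End GoodVertices.

Lemma strongly_sofic_good_vertices (M : monoid) (S L : list M) (r : nat) (f : 'I_r -> M) :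
  strongly_sofic M -> injective f -> 0 < r ->
  exists Delta, forall Q, 0 < Q ->
  exists (D : finType) (sigma : M -> D -> D) (W : {set D}),
    [/\ 0 < #|D| /\ (forall v, sigma (mone M) v = v),
        {in W, forall v s k, List.In s S -> List.In k L ->
           sigma (mmul s k) v = sigma s (sigma k v)},
        {in W, forall v, injective (fun i => sigma (f i) v)},
        (forall i u, #|[set w | sigma (f i) w == u]| <= Delta)
      & 2 * Q * #|~: W| <= #|D|].
Proof.
move=> sofic f_inj r_gt0; pose K := S ++ L ++ map f (enum 'I_r).
have inK_S s : List.In s S -> List.In s K by move=> Ss; apply: List.in_or_app; left.
have inK_L k : List.In k L -> List.In k K.
  by move=> Lk; apply: List.in_or_app; right; apply: List.in_or_app; left.
have inK_f i : List.In (f i) K.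
  by apply: List.in_or_app; right; apply: List.in_or_app; right; apply/List.in_map/In_enum.
have [Delta [_ sofic_K]] := sofic K; exists Delta => Q Q_gt0.
pose c := size S * size L + r * r.
have c_gt0 : 0 < c by rewrite addn_gt0 !muln_gt0 r_gt0 orbT.
have q_gt0 : 0 < 2 * Q * c by rewrite !muln_gt0 Q_gt0 c_gt0.
have eps_gt0 : (0 < / INR (2 * Q * c))%R by apply/Rinv_0_lt_compat/lt_0_INR/ltP.
have [D [sigma [D_gt0 [sigma_one [sigma_mul [sigma_sep sigma_fiber]]]]]] := sofic_K _ eps_gt0.
have [W [W_mul W_sep W_card]] := exists_good_vertices (S := S) (L := L) (f := f) D_gt0 q_gt0
  (fun s k Ss Lk => sigma_mul s k (inK_S s Ss) (inK_L k Lk))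
  (fun i j ij => sigma_sep _ _ (inK_f i) (inK_f j) (contra_neq_not (@f_inj i j) ij)).
exists D, sigma, W; split=> //.
- by split=> // v; rewrite sigma_one.
- by move=> i u; apply: sigma_fiber.
rewrite -(leq_pmul2r c_gt0) mulnAC mulnC; apply: leq_trans W_card _.
by rewrite /c; nia.
Qed.

Section LocalMap.
Variables (M : monoid) (A : finType) (tau : (M -> A) -> M -> A).
Hypothesis tau_shift : forall m x, tau (shift m x) = shift m (tau x).
Variables (S N : list M) (r : nat) (f : 'I_r -> M) (y : M -> A).
Hypothesis tau_memory :
  forall x x', agree_on S x x' -> tau x (mone M) = tau x' (mone M).
Hypothesis tau_inj_on :
  forall x x', agree_on N (tau x) (tau x') -> x (mone M) = x' (mone M).
Hypothesis y_obstructed : forall x, exists i, tau x (f i) <> y (f i).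
Variables (D : finType) (sigma : M -> D -> D).
Hypothesis sigma_one : forall v, sigma (mone M) v = v.

Definition pullback (z : {ffun D -> A}) (v : D) : M -> A := fun m => z (sigma m v).

Definition local_map (z : {ffun D -> A}) : {ffun D -> A} :=
  [ffun v => tau (pullback z v) (mone M)].

Lemma tau_pullback z v k :
  (forall s, List.In s S -> sigma (mmul s k) v = sigma s (sigma k v)) ->
  tau (pullback z v) k = local_map z (sigma k v).
Proof.
move=> mul_k; have -> : tau (pullback z v) k = shift k (tau (pullback z v)) (mone M).
  by rewrite /shift mmul1m.
rewrite -tau_shift ffunE.
by apply: tau_memory => s Ss; rewrite /shift /pullback mul_k.
Qed.

Lemma local_map_injective_at z z' v :
  (forall s n, List.In s S -> List.In n N -> sigma (mmul s n) v = sigma s (sigma n v)) ->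
  local_map z = local_map z' -> z v = z' v.
Proof.
move=> mul_v eq_z; rewrite -[v]sigma_one.
apply: (tau_inj_on (x := pullback z v) (x' := pullback z' v)) => n Nn.
by rewrite !tau_pullback ?eq_z // => s Ss; apply: mul_v.
Qed.

Lemma local_map_avoids z v :
  (forall s i, List.In s S -> sigma (mmul s (f i)) v = sigma s (sigma (f i) v)) ->
  pattern (local_map z) (fun i => sigma (f i) v) != [ffun i => y (f i)].
Proof.
move=> mul_v; have [i ne_i] := y_obstructed (pullback z v).
apply/eqP => /ffunP /(_ i); rewrite [pattern _ _ _]ffunE -tau_pullback ?ffunE //.
by move=> s Ss; apply: mul_v.
Qed.

Variables (W : {set D}) (Delta : nat).
Hypothesis W_mul : {in W, forall v s k, List.In s S -> List.In k (N ++ map f (enum 'I_r)) ->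
  sigma (mmul s k) v = sigma s (sigma k v)}.
Hypothesis W_sep : {in W, forall v, injective (fun i => sigma (f i) v)}.
Hypothesis sigma_fiber : forall i u, #|[set w | sigma (f i) w == u]| <= Delta.

Let window v i := sigma (f i) v.

Let exists_disjoint_windows (a0 : A) : exists V : {set D},
  [/\ V \subset W,
      {in V &, forall v v', v != v' -> [disjoint codom (window v) & codom (window v')]}
    & #|W| <= #|V| * (r * (r * Delta))].
Proof.
have [i0 _] := y_obstructed (fun=> a0).
pose adj w v := [exists i, exists j, window w i == window v j].
have adj_refl : reflexive adj by move=> v; apply/existsP; exists i0; apply/existsP; exists i0.
have adj_sym : symmetric adj.
  by move=> v w; apply/existsP/existsP => -[i /existsP [j /eqP e]];
    exists j; apply/existsP; exists i; rewrite e.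
have adj_degree v : #|[set w | adj w v]| <= r * (r * Delta).
  have adj_sub : [set w | adj w v] \subset
      \bigcup_(i <- enum 'I_r) \bigcup_(j <- enum 'I_r) [set w | window w i == window v j].
    apply/subsetP => w; rewrite inE => /existsP [i /existsP [j e]].
    rewrite bigcup_seq; apply/bigcupP; exists i; rewrite ?mem_enum //.
    by rewrite bigcup_seq; apply/bigcupP; exists j; rewrite ?mem_enum ?inE.
  rewrite -(muln1 #|_|); apply: leq_trans (leq_mul (subset_leq_card adj_sub) (leqnn 1)) _.
  rewrite -[X in _ <= X * _](size_enum_ord r); apply: card_bigcup_seq_le => i _.
  rewrite -[X in _ <= X * _](size_enum_ord r); apply: card_bigcup_seq_le => j _.
  by rewrite muln1 sigma_fiber.
have [V [VW Vsparse WV]] := exists_sparse_subset adj_refl adj_sym adj_degree W.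
exists V; split=> // v v' vV v'V /(Vsparse _ _ vV v'V) nadj.
rewrite disjoint_has; apply/hasPn => _ /codomP [i ->]; apply/negP => /codomP [j e].
by case/negP: nadj; apply/existsP; exists i; apply/existsP; exists j; rewrite e.
Qed.

Hypothesis A_nontrivial : 1 < #|A|.
Hypothesis D_gt0 : 0 < #|D|.
Hypothesis few_bad :
  2 * (r * (r * Delta) * ((#|A| - 1) * (#|A| ^ r - 1)) + 1) * #|~: W| <= #|D|.

Lemma sofic_counting_contradiction : False.
Proof.
have /card_gt0P [a0 _] := ltnW A_nontrivial.
have [i0 _] := y_obstructed (fun=> a0).
have [V [VW V_disj WV]] := exists_disjoint_windows a0.
have mulN : {in W, forall v s n, List.In s S -> List.In n N ->
    sigma (mmul s n) v = sigma s (sigma n v)}.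
  by move=> v vW s n Ss Nn; apply: W_mul => //; apply: List.in_or_app; left.
have mulF : {in W, forall v s i, List.In s S ->
    sigma (mmul s (f i)) v = sigma s (sigma (f i) v)}.
  move=> v vW s i Ss; apply: W_mul => //; apply: List.in_or_app; right.
  by apply: List.in_map; apply: In_enum.
pose g := [ffun i => y (f i)].
have image_lb : #|A| ^ #|W| <= #|local_map @: [set: {ffun D -> A}]|.
  apply: (card_image_ge_restrict a0) => z z' eq_z v vW.
  exact: local_map_injective_at (mulN v vW) eq_z.
have image_sub : local_map @: [set: {ffun D -> A}] \subset avoiding window g (enum V).
  apply/subsetP => _ /imsetP [z _ ->]; rewrite inE; apply/allP => v; rewrite mem_enum => vV.
  exact: local_map_avoids (mulF v (subsetP VW v vV)).
have count_avoiding : #|avoiding window g (enum V)| * (#|A| ^ r) ^ #|V| =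
    #|A| ^ #|D| * (#|A| ^ r - 1) ^ #|V|.
  rewrite [#|V|]cardE; apply: card_avoiding; first exact: enum_uniq.
    by move=> v; rewrite mem_enum => vV; apply: W_sep (subsetP VW v vV).
  by move=> v v'; rewrite !mem_enum; apply: V_disj.
have b_gt1 : 1 < #|A| ^ r.
  apply: leq_trans A_nontrivial _; rewrite -{1}(expn1 #|A|) leq_pexp2l ?(ltnW A_nontrivial) //.
  exact: leq_ltn_trans (leq0n i0) (ltn_ord i0).
have D_eq : #|D| = #|W| + #|~: W| by rewrite cardsC.
have : #|A| ^ #|W| * (#|A| ^ r) ^ #|V| <=
       #|A| ^ #|W| * (#|A| ^ #|~: W| * (#|A| ^ r - 1) ^ #|V|).
  rewrite mulnA -expnD -D_eq -count_avoiding.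
  by rewrite leq_mul2r (leq_trans image_lb) ?orbT ?subset_leq_card.
rewrite leq_pmul2l ?expn_gt0 ?(ltnW A_nontrivial) // leqNgt.
rewrite -[X in _ < X ^ _](@subnK 1) ?(ltnW b_gt1) //.
rewrite expn_ratio_gt ?(ltnW A_nontrivial) ?subn_gt0 //.
(* Few bad vertices and |W| <= |V| r^2 Delta leave |V| too large. *)
move: few_bad WV D_gt0; rewrite D_eq.
move: (r * (r * Delta)) ((#|A| - 1) * (#|A| ^ r - 1)) #|~: W| #|V| #|W| => d t beta n w.
nia.
Qed.
End LocalMap.

Theorem theorem1p1 (M : monoid) : strongly_sofic M -> surjunctive M.
Proof.
move=> sofic A tau [tau_cont tau_shift] tau_inj y.
have tau_lc m : locally_constant (fun x => tau x m) := fun x => tau_cont x m.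
apply: contrapT => /forallNP y_notin.
have [A_le1|A_gt1] := leqP #|A| 1.
  move/card_le1_eqP: A_le1 => A_trivial.
  by apply: (y_notin (fun=> y (mone M))); apply: funext => m; apply: A_trivial.
have [r [f [f_inj y_obstructed]]] := finite_obstruction tau_lc y_notin.
have r_gt0 : 0 < r.
  by have [i _] := y_obstructed y; exact: leq_ltn_trans (leq0n i) (ltn_ord i).
have [S tau_memory] := locally_constant_uniform (tau_lc (mone M)).
have [N tau_inj_on] := injective_uniform (mone M) tau_lc tau_inj.
have [Delta approx] :=
  strongly_sofic_good_vertices S (N ++ map f (enum 'I_r)) sofic f_inj r_gt0.
have [D [sigma [W [[D_gt0 sigma_one] W_mul W_sep sigma_fiber W_large]]]] :=
  approx (r * (r * Delta) * ((#|A| - 1) * (#|A| ^ r - 1)) + 1) (ltn_addl _ (ltn0Sn 0)).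
exact: (sofic_counting_contradiction tau_shift tau_memory tau_inj_on y_obstructed
  sigma_one W_mul W_sep sigma_fiber A_gt1 D_gt0 W_large).
Qed.
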